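(* For every integer $n\ge1$, $$\exp\!\left(\pi\sqrt{\tfrac{2n}{3}}\left(\sqrt{1-\tfrac{1}{24n}}-1\right)\right)=\sum_{t=0}^\infty e_1(t)\,n^{-t}+\sum_{t=0}^\infty o_1(t)\,n^{-(2t+1)/2},$$ where $e_1(0)=1$, $$e_1(t)=\frac{(-1)^t}{24^t}\frac{(1/2-t)_{t+1}}{t}\sum_{u=1}^t\frac{(-1)^u(-t)_u}{(t+u)!\,(2u-1)!}\left(\frac{\pi^2}{36}\right)^u\quad(t\ge1),$$ $$o_1(t)=-\frac{\pi}{12\sqrt6}\cdot\frac{(-1)^t(1/2-t)_{t+1}}{24^t}\sum_{u=0}^t\frac{(-1)^u(-t)_u}{(t+u+1)!\,(2u)!}\left(\frac{\pi^2}{36}\right)^u\quad(t\ge0).$$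
   Context: $(a)_m=a(a+1)\cdots(a+m-1)$ denotes the rising factorial (Pochhammer symbol), with $(a)_0=1$. *)

From Stdlib Require Import Reals Lra.
From Coquelicot Require Import Coquelicot.
Open Scope R_scope.

Fixpoint poch (a : R) (m : nat) : R :=
  match m with
  | O => 1
  | S k => poch a k * (a + INR k)
  end.

Fixpoint sumR (f : nat -> R) (n : nat) : R :=
  match n with
  | O => 0
  | S k => sumR f k + f k
  end.

Definition e1 (t : nat) : R :=
  match t with
  | O => 1
  | S _ =>
    (-1) ^ t / 24 ^ t * poch (1/2 - INR t) (t + 1) / INR t *
    sumR (fun k => let u := (k + 1)%nat in
            (-1) ^ u * poch (- INR t) u
            / (INR (Factorial.fact (t + u)) * INR (Factorial.fact (2 * u - 1)))
            * (PI ^ 2 / 36) ^ u) t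
  end.

Definition o1 (t : nat) : R :=
  - (PI / (12 * sqrt 6)) *
  ((-1) ^ t * poch (1/2 - INR t) (t + 1) / 24 ^ t) *
  sumR (fun u =>
          (-1) ^ u * poch (- INR t) u
          / (INR (Factorial.fact (t + u + 1)) * INR (Factorial.fact (2 * u)))
          * (PI ^ 2 / 36) ^ u) (t + 1).

(* With s = 1/sqrt(24 n), the exponent is -(PI/6) u where u = (1 - sqrt(1 - s^2))/s is
   the root in [0,1] of u = (s/2)(1 + u^2).  Hence u^m = sum_N ballot(N,m) (s/2)^N, the
   ballot numbers counting first-passage walks of length N from height m to 0, with the
   closed form (m/N) binom(N, (N-m)/2).  Expanding exp(-(PI/6) u) and interchanging the
   absolutely convergent triangular double sum gives a power series in s; its even part
   is the e1-series in 1/n and its odd part the o1-series in n^(-1/2), the coefficients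
   matching via two Pochhammer evaluations. *)

From Stdlib Require Import Reals Lra Lia.
From Coquelicot Require Import Coquelicot.
Open Scope R_scope.

Lemma sumR_ext (f g : nat -> R) K :
  (forall k, (k < K)%nat -> f k = g k) -> sumR f K = sumR g K.
Proof.
  intro H; induction K; simpl; [reflexivity|].
  rewrite IHK by (intros; apply H; lia). rewrite H by lia. reflexivity.
Qed.

Lemma sumR_plus (f g : nat -> R) K :
  sumR (fun k => f k + g k) K = sumR f K + sumR g K.
Proof. induction K; simpl; [ring|]. rewrite IHK; ring. Qed.

Lemma sumR_minus (f g : nat -> R) K :
  sumR (fun k => f k - g k) K = sumR f K - sumR g K.
Proof. induction K; simpl; [ring|]. rewrite IHK; ring. Qed.

Lemma sumR_scal (c : R) (f : nat -> R) K :
  sumR (fun k => c * f k) K = c * sumR f K.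
Proof. induction K; simpl; [ring|]. rewrite IHK; ring. Qed.

Lemma sumR_const (c : R) K : sumR (fun _ => c) K = INR K * c.
Proof. induction K; simpl sumR; [simpl; ring|]. rewrite IHK, S_INR; ring. Qed.

Lemma sumR_eq0 (g : nat -> R) K :
  (forall k, (k < K)%nat -> g k = 0) -> sumR g K = 0.
Proof. intro H. rewrite (sumR_ext g (fun _ => 0)) by exact H. rewrite sumR_const. ring. Qed.

Lemma sumR_abs (c : nat -> R) K :
  Rabs (sumR c K) <= sumR (fun k => Rabs (c k)) K.
Proof.
  induction K; simpl.
  - rewrite Rabs_R0; lra.
  - eapply Rle_trans; [apply Rabs_triang|]. lra.
Qed.

Lemma sumR_le (c d : nat -> R) K :
  (forall k, c k <= d k) -> sumR c K <= sumR d K.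
Proof. intro H; induction K; simpl; [lra|]. specialize (H K); lra. Qed.

Lemma sumR_first (g : nat -> R) K :
  sumR g (S K) = g 0%nat + sumR (fun k => g (S k)) K.
Proof. induction K; simpl in *; [ring|]. rewrite IHK; ring. Qed.

Lemma sumR_shift (a : nat -> R) K M :
  sumR (fun k => a (K + k)%nat) M = sumR a (M + K) - sumR a K.
Proof.
  induction M; simpl; [ring|].
  rewrite IHM, (Nat.add_comm K M); ring.
Qed.

Lemma sumR_swap (f : nat -> nat -> R) K K' :
  sumR (fun N => sumR (fun m => f m N) K) K' = sumR (fun m => sumR (f m) K') K.
Proof.
  induction K'; simpl.
  - rewrite sumR_eq0 by reflexivity; reflexivity.
  - rewrite IHK', <- sumR_plus. reflexivity.
Qed.

Lemma sumR_vanishing_tail (g : nat -> R) N K :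
  (forall m, (N < m)%nat -> g m = 0) -> (N < K)%nat -> sumR g (S N) = sumR g K.
Proof.
  intros Hg HK. induction K; [lia|].
  destruct (Nat.eq_dec K N) as [->|Hne]; [reflexivity|].
  change (sumR g (S K)) with (sumR g K + g K).
  rewrite <- IHK, (Hg K) by lia. ring.
Qed.

Lemma sumR_pairs (g : nat -> R) K :
  sumR g (2 * K) = sumR (fun p => g (2 * p)%nat) K + sumR (fun p => g (2 * p + 1)%nat) K.
Proof.
  rewrite <- sumR_plus. induction K; [reflexivity|].
  replace (2 * S K)%nat with (S (S (2 * K))) by lia.
  cbn [sumR]. rewrite IHK. replace (2 * K + 1)%nat with (S (2 * K)) by lia. ring.
Qed.

Lemma sumR_geom_le y K : 0 <= y < 1 -> sumR (fun k => y ^ k) K <= / (1 - y).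
Proof.
  intro Hy.
  assert (E : sumR (fun k => y ^ k) K * (1 - y) = 1 - y ^ K).
  { induction K; simpl; [ring|]. rewrite Rmult_plus_distr_r, IHK. ring. }
  apply Rmult_le_reg_r with (1 - y); [lra|].
  rewrite E, Rinv_l by lra. pose proof (pow_le y K ltac:(lra)). lra.
Qed.

Lemma is_series_sumR (a : nat -> R) l :
  is_series a l <-> is_lim_seq (sumR a) l.
Proof.
  assert (E : forall K, sum_n a K = sumR a (S K)).
  { induction K as [|K IH].
    - rewrite sum_O. simpl. ring.
    - rewrite sum_Sn, IH. reflexivity. }
  rewrite (is_lim_seq_incr_1 (sumR a)).
  split; intro H.
  - exact (is_lim_seq_ext (sum_n a) _ l E H).
  - exact (is_lim_seq_ext _ (sum_n a) l (fun K => eq_sym (E K)) H).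
Qed.

Lemma is_series_Rabs_le (c d : nat -> R) L D :
  is_series c L -> (forall n, Rabs (c n) <= d n) -> is_series d D -> Rabs L <= D.
Proof.
  rewrite !is_series_sumR. intros Hc Hcd Hd.
  apply is_lim_seq_abs in Hc.
  refine (is_lim_seq_le _ _ _ _ _ Hc Hd).
  intro K. eapply Rle_trans; [apply sumR_abs | apply sumR_le, Hcd].
Qed.

Lemma is_series_tail (a : nat -> R) l K :
  is_series a l -> is_series (fun k => a (K + k)%nat) (l - sumR a K).
Proof.
  rewrite !is_series_sumR. intro H.
  apply is_lim_seq_ext with (u := fun M => sumR a (M + K) - sumR a K).
  - intro; symmetry; apply sumR_shift.
  - apply (is_lim_seq_minus' _ (fun _ => sumR a K)); [|apply is_lim_seq_const].
    apply (is_lim_seq_incr_n (sumR a) K), H.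
Qed.

Lemma series_tail_bound (a : nat -> R) l c x K : 0 <= x < 1 ->
  is_series a l -> (forall n, Rabs (a n) <= c * x ^ n) ->
  Rabs (l - sumR a K) <= c * x ^ K / (1 - x).
Proof.
  intros Hx Ha Hb.
  apply (is_series_Rabs_le _ (fun k => c * x ^ K * x ^ k) _ _ (is_series_tail a l K Ha)).
  - intro k. rewrite Rmult_assoc, <- pow_add. apply Hb.
  - apply (@is_series_scal_l R_AbsRing R_NormedModule), is_series_geom. rewrite Rabs_right; lra.
Qed.

Lemma is_lim_seq_geom_dominated (e : nat -> R) C x : 0 <= x < 1 ->
  (forall K, Rabs (e K) <= C * x ^ K) -> is_lim_seq e 0.
Proof.
  intros Hx He. apply is_lim_seq_abs_0.
  apply is_lim_seq_le_le with (u := fun _ => 0) (w := fun K => C * x ^ K).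
  - intro K. split; [apply Rabs_pos | apply He].
  - apply is_lim_seq_const.
  - replace (Finite 0) with (Rbar_mult C 0) by (simpl; f_equal; ring).
    apply is_lim_seq_scal_l, is_lim_seq_geom. rewrite Rabs_right; lra.
Qed.

Lemma is_series_triangle_swap (f : nat -> nat -> R) (F : nat -> R) x y L :
  0 <= x < 1 -> 0 <= y < 1 ->
  (forall m N, (N < m)%nat -> f m N = 0) ->
  (forall m N, Rabs (f m N) <= y ^ m * x ^ N) ->
  (forall m, is_series (f m) (F m)) -> is_series F L ->
  is_series (fun N => sumR (fun m => f m N) (S N)) L.
Proof.
  intros Hx Hy Hz Hb HF HL.
  apply is_series_sumR. apply is_series_sumR in HL.
  (* The K-th partial sum misses from [sumR F K] only the K-tails of the first K columns,
     which together are O(x^K). *)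
  apply is_lim_seq_ext with
    (u := fun K => sumR F K - sumR (fun m => F m - sumR (f m) K) K).
  - intro K. rewrite sumR_minus, <- (sumR_swap f K K).
    rewrite (sumR_ext (fun N => sumR (fun m => f m N) (S N))
                      (fun N => sumR (fun m => f m N) K)); [ring|].
    intros N HN. apply sumR_vanishing_tail; [|exact HN]. intros; apply Hz; lia.
  - replace L with (L - 0) by ring.
    apply (is_lim_seq_minus' _ _ L 0 HL).
    apply (is_lim_seq_geom_dominated _ (/ (1 - x) * / (1 - y)) x Hx). intro K.
    eapply Rle_trans; [apply sumR_abs|].
    eapply Rle_trans.
    { apply (sumR_le _ (fun m => y ^ m * x ^ K / (1 - x))). intro m.
      apply (series_tail_bound (f m) (F m)); auto. }
    unfold Rdiv. rewrite (sumR_ext _ (fun m => x ^ K * / (1 - x) * y ^ m)) by (intros; ring).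
    rewrite sumR_scal.
    assert (0 <= x ^ K * / (1 - x)).
    { apply Rmult_le_pos; [apply pow_le; lra | left; apply Rinv_0_lt_compat; lra]. }
    pose proof (sumR_geom_le y K Hy).
    replace (/ (1 - x) * / (1 - y) * x ^ K) with (x ^ K * / (1 - x) * / (1 - y)) by ring.
    apply Rmult_le_compat_l; assumption.
Qed.

Lemma is_series_even_odd (a : nat -> R) C x L :
  0 <= x < 1 -> (forall N, Rabs (a N) <= C * x ^ N) -> is_series a L ->
  exists A B, is_series (fun t => a (2 * t)%nat) A /\
              is_series (fun t => a (2 * t + 1)%nat) B /\ L = A + B.
Proof.
  intros Hx Hb HL.
  assert (HA : ex_series (fun t => a (2 * t)%nat)).
  { apply (@ex_series_le R_AbsRing R_CompleteNormedModule _ (fun t => C * (x ^ 2) ^ t)).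
    - intro t. rewrite <- pow_mult. apply Hb.
    - apply (@ex_series_scal_l R_AbsRing R_CompleteNormedModule), ex_series_geom.
      rewrite Rabs_right by (apply Rle_ge, pow_le; lra). simpl. nra. }
  destruct HA as [A HA].
  assert (HP : is_series (fun t => a (2 * t)%nat + a (2 * t + 1)%nat) L).
  { apply is_series_sumR. apply is_series_sumR in HL.
    apply is_lim_seq_ext with (u := fun K => sumR a (2 * K)).
    - intro; rewrite sumR_pairs, sumR_plus; reflexivity.
    - apply (is_lim_seq_subseq (sumR a) L (fun K => 2 * K)%nat); [|exact HL].
      apply eventually_subseq. intro; lia. }
  exists A, (L - A). split; [exact HA|]. split; [|symmetry; apply Rplus_minus].
  refine (is_series_ext _ _ _ _ (is_series_minus _ _ _ _ HP HA)).
  intro t. apply Rplus_minus_l.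
Qed.

Fixpoint ballot (N m : nat) : R :=
  match N, m with
  | O, O => 1
  | O, S _ => 0
  | S _, O => 0
  | S N', S m' => ballot N' m' + ballot N' (S (S m'))
  end.

Lemma ballot_pos_0 N : (0 < N)%nat -> ballot N 0 = 0.
Proof. destruct N; [lia | reflexivity]. Qed.

Lemma ballot_S_S N m : ballot (S N) (S m) = ballot N m + ballot N (S (S m)).
Proof. reflexivity. Qed.

Lemma ballot_bounds N m : 0 <= ballot N m <= 2 ^ N.
Proof.
  revert m; induction N; intro m; destruct m as [|m]; simpl; try lra;
    pose proof (pow_le 2 N ltac:(lra)); [lra|].
  pose proof (IHN m); pose proof (IHN (S (S m))); lra.
Qed.

Lemma ballot_eq0_lt N m : (N < m)%nat -> ballot N m = 0.
Proof.
  revert m; induction N; intros m Hm; destruct m as [|m]; simpl; try lia; try reflexivity.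
  rewrite !IHN by lia. ring.
Qed.

Lemma ballot_eq0_odd N m : Nat.Odd (N + m) -> ballot N m = 0.
Proof.
  revert m; induction N; intros m [k Hk]; destruct m as [|m]; try reflexivity.
  - lia.
  - cbn [ballot]. rewrite !IHN; [ring| exists k | exists (k - 1)%nat]; lia.
Qed.

Lemma ballot_diag m : ballot m m = 1.
Proof. induction m; simpl; [reflexivity|]. rewrite IHm, ballot_eq0_lt by lia. ring. Qed.

Lemma INR_fact_S k : INR (Factorial.fact (S k)) = INR (S k) * INR (Factorial.fact k).
Proof. rewrite <- mult_INR. reflexivity. Qed.

Lemma INR_fact_pos k : 0 < INR (Factorial.fact k).
Proof. apply lt_0_INR, Factorial.lt_O_fact. Qed.

Definition ballot_formula (m j : nat) : R :=
  INR (m + 1) * INR (Factorial.fact (m + 2 * j)) /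
  (INR (Factorial.fact j) * INR (Factorial.fact (m + 1 + j))).

Lemma ballot_formula_0_S j : ballot_formula 0 (S j) = ballot_formula 1 j.
Proof.
  unfold ballot_formula.
  replace (0 + 2 * S j)%nat with (S (S (2 * j))) by lia.
  replace (0 + 1 + S j)%nat with (S (S j)) by lia.
  replace (1 + 2 * j)%nat with (S (2 * j)) by lia.
  replace (1 + 1 + j)%nat with (S (S j)) by lia.
  rewrite !INR_fact_S.
  pose proof (INR_fact_pos j); pose proof (INR_fact_pos (2 * j)); pose proof (pos_INR j).
  rewrite !S_INR, mult_INR, ?plus_INR, !S_INR, INR_0. field. lra.
Qed.

Lemma ballot_formula_S_S m j :
  ballot_formula (S m) (S j) = ballot_formula m (S j) + ballot_formula (S (S m)) j.
Proof.
  unfold ballot_formula.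
  replace (S m + 2 * S j)%nat with (S (S (S (m + 2 * j)))) by lia.
  replace (m + 2 * S j)%nat with (S (S (m + 2 * j))) by lia.
  replace (S (S m) + 2 * j)%nat with (S (S (m + 2 * j))) by lia.
  replace (S m + 1 + S j)%nat with (S (S (S (m + j)))) by lia.
  replace (m + 1 + S j)%nat with (S (S (m + j))) by lia.
  replace (S (S m) + 1 + j)%nat with (S (S (S (m + j)))) by lia.
  rewrite !INR_fact_S.
  pose proof (INR_fact_pos j); pose proof (INR_fact_pos (m + j)).
  pose proof (INR_fact_pos (m + 2 * j)); pose proof (pos_INR j); pose proof (pos_INR m).
  rewrite !S_INR, !plus_INR, !mult_INR, !S_INR, INR_0. field. repeat split; lra.
Qed.

Lemma ballot_closed j m : ballot (m + 1 + 2 * j) (m + 1) = ballot_formula m j.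
Proof.
  revert m; induction j as [|j IHj]; intro m.
  - rewrite Nat.mul_0_r, Nat.add_0_r, ballot_diag. unfold ballot_formula.
    rewrite !Nat.mul_0_r, !Nat.add_0_r, Nat.add_1_r, INR_fact_S.
    pose proof (INR_fact_pos m); pose proof (pos_INR m).
    simpl (Factorial.fact 0). rewrite S_INR, INR_1. field. lra.
  - induction m as [|m IHm].
    + replace (0 + 1 + 2 * S j)%nat with (S (1 + 1 + 2 * j)) by lia.
      rewrite Nat.add_0_l, ballot_S_S, ballot_pos_0, Rplus_0_l by lia.
      rewrite ballot_formula_0_S, <- (IHj 1%nat). reflexivity.
    + replace (S m + 1 + 2 * S j)%nat with (S (m + 1 + 2 * S j)) by lia.
      replace (S m + 1)%nat with (S (m + 1)) by lia.
      rewrite ballot_S_S, IHm, ballot_formula_S_S.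
      replace (m + 1 + 2 * S j)%nat with (S (S m) + 1 + 2 * j)%nat by lia.
      replace (S (S (m + 1))) with (S (S m) + 1)%nat by lia.
      rewrite IHj. reflexivity.
Qed.

Lemma ballot_term_bound h N m : 0 <= h -> Rabs (ballot N m * h ^ N) <= (2 * h) ^ N.
Proof.
  intro Hh. destruct (ballot_bounds N m). pose proof (pow_le h N Hh).
  rewrite Rabs_right by (apply Rle_ge, Rmult_le_pos; lra).
  rewrite Rpow_mult_distr. apply Rmult_le_compat_r; lra.
Qed.

Lemma ex_series_ballot h m : 0 <= h < 1/2 -> ex_series (fun N => ballot N m * h ^ N).
Proof.
  intro Hh.
  apply (@ex_series_le R_AbsRing R_CompleteNormedModule _ (fun N => (2 * h) ^ N)).
  - intro N. apply ballot_term_bound. lra.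
  - apply ex_series_geom. rewrite Rabs_right; lra.
Qed.

Definition ballot_gf (h : R) (m : nat) : R := Series (fun N => ballot N m * h ^ N).

Lemma ballot_gf_0 h : ballot_gf h 0 = 1.
Proof.
  apply is_series_unique, is_series_sumR, is_lim_seq_incr_1.
  apply is_lim_seq_ext with (u := fun _ => 1); [|apply is_lim_seq_const].
  intro K. rewrite sumR_first, sumR_eq0 by (intros; rewrite ballot_pos_0 by lia; ring).
  simpl; ring.
Qed.

Lemma ballot_gf_S h m : 0 <= h < 1/2 ->
  ballot_gf h (S m) = h * (ballot_gf h m + ballot_gf h (S (S m))).
Proof.
  intro Hh. unfold ballot_gf.
  rewrite Series_incr_1, <- Series_plus, <- Series_scal_l by (apply ex_series_ballot, Hh).
  simpl ballot at 1. rewrite Rmult_0_l, Rplus_0_l.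
  apply Series_ext. intro N. rewrite ballot_S_S. simpl. ring.
Qed.

Lemma ballot_gf_bound h m : 0 <= h < 1/2 -> Rabs (ballot_gf h m) <= / (1 - 2 * h).
Proof.
  intro Hh. apply (is_series_Rabs_le (fun N => ballot N m * h ^ N) (fun N => (2 * h) ^ N)).
  - apply Series_correct, ex_series_ballot, Hh.
  - intro N. apply ballot_term_bound. lra.
  - apply is_series_geom. rewrite Rabs_right; lra.
Qed.

(* Each step of the recurrence contracts a uniform bound by the factor [2 h]. *)
Lemma bounded_recurrence_eq0 (D : nat -> R) h C : 0 <= h < 1/2 -> D 0%nat = 0 ->
  (forall m, D (S m) = h * (D m + D (S (S m)))) -> (forall m, Rabs (D m) <= C) ->
  forall m, D m = 0.
Proof.
  intros Hh D0 Drec HC.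
  assert (HC0 : 0 <= C) by (specialize (HC 0%nat); rewrite D0, Rabs_R0 in HC; exact HC).
  assert (Hk : forall k m, Rabs (D m) <= C * (2 * h) ^ k).
  { induction k as [|k IHk]; intro m; [simpl; rewrite Rmult_1_r; apply HC|].
    pose proof (pow_le (2 * h) k ltac:(lra)).
    destruct m as [|m]; [rewrite D0, Rabs_R0; apply Rmult_le_pos; [lra | apply pow_le; lra]|].
    rewrite Drec, Rabs_mult, (Rabs_right h) by lra.
    pose proof (Rabs_triang (D m) (D (S (S m)))); pose proof (IHk m); pose proof (IHk (S (S m))).
    simpl. nra. }
  intro m.
  assert (L := is_lim_seq_geom_dominated (fun _ => D m) C (2 * h) ltac:(lra) (fun k => Hk k m)).
  apply is_lim_seq_unique in L. rewrite Lim_seq_const in L. now injection L.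
Qed.

Definition catalan_root (s : R) : R := (1 - sqrt (1 - s ^ 2)) / s.

Lemma catalan_root_bounds s : 0 < s < 1 -> 0 <= catalan_root s <= 1.
Proof.
  intro Hs. unfold catalan_root. set (r := sqrt (1 - s ^ 2)).
  assert (r * r = 1 - s ^ 2) by (apply sqrt_sqrt; nra).
  assert (0 <= r) by apply sqrt_pos.
  split.
  - apply Rmult_le_pos; [nra | left; apply Rinv_0_lt_compat; lra].
  - apply Rmult_le_reg_r with s; [lra|]. unfold Rdiv.
    rewrite Rmult_assoc, Rinv_l; nra.
Qed.

Lemma catalan_root_eq s : 0 < s < 1 ->
  catalan_root s = s / 2 * (1 + catalan_root s ^ 2).
Proof.
  intro Hs. unfold catalan_root.
  assert (sqrt (1 - s ^ 2) * sqrt (1 - s ^ 2) = 1 - s ^ 2) by (apply sqrt_sqrt; nra).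
  field_simplify_eq; [nra | lra].
Qed.

Lemma ballot_gf_catalan_root s m : 0 < s < 1 -> ballot_gf (s / 2) m = catalan_root s ^ m.
Proof.
  intro Hs. destruct (catalan_root_bounds s Hs) as [U0 U1].
  pose proof (catalan_root_eq s Hs) as Hu. set (u := catalan_root s) in *.
  assert (Hh : 0 <= s / 2 < 1/2) by lra.
  apply Rminus_diag_uniq. revert m.
  apply (bounded_recurrence_eq0 _ (s / 2) (/ (1 - 2 * (s / 2)) + 1) Hh).
  - rewrite ballot_gf_0. simpl; ring.
  - intro m. rewrite ballot_gf_S by exact Hh.
    assert (E : u ^ S m = s / 2 * (u ^ m + u ^ S (S m))).
    { rewrite <- !tech_pow_Rmult. rewrite Hu at 1. ring. }
    rewrite E. ring.
  - intro m. unfold Rminus at 1. eapply Rle_trans; [apply Rabs_triang|].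
    rewrite Rabs_Ropp, (Rabs_right (u ^ m)) by (apply Rle_ge, pow_le; lra).
    pose proof (ballot_gf_bound (s / 2) m Hh).
    assert (u ^ m <= 1) by (rewrite <- (pow1 m); apply pow_incr; lra).
    lra.
Qed.

Lemma poch_succ_l x k : poch x (S k) = x * poch (x + 1) k.
Proof.
  induction k as [|k IHk]; [simpl; ring|].
  change (poch x (S (S k))) with (poch x (S k) * (x + INR (S k))).
  rewrite IHk. simpl poch. rewrite S_INR. ring.
Qed.

Lemma poch_opp_nat u t : (u <= t)%nat ->
  (-1) ^ u * poch (- INR t) u * INR (Factorial.fact (t - u)) = INR (Factorial.fact t).
Proof.
  revert t; induction u as [|u IHu]; intros t Hu.
  - simpl. rewrite Nat.sub_0_r. ring.
  - rewrite <- (IHu t) by lia.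
    replace (t - u)%nat with (S (t - S u)) by lia.
    rewrite INR_fact_S, S_INR, minus_INR, S_INR by lia. cbn [poch pow]. ring.
Qed.

Lemma poch_half t :
  (-1) ^ t * poch (1 / 2 - INR t) (S t) * (2 * 4 ^ t * INR (Factorial.fact t)) =
  INR (Factorial.fact (2 * t)).
Proof.
  induction t as [|t IHt]; [simpl; field|].
  rewrite poch_succ_l.
  replace (1 / 2 - INR (S t) + 1) with (1 / 2 - INR t) by (rewrite S_INR; ring).
  replace (2 * S t)%nat with (S (S (2 * t))) by lia.
  rewrite !INR_fact_S, <- IHt, !S_INR, mult_INR. simpl (INR 2).
  rewrite <- !tech_pow_Rmult. field.
Qed.

Lemma poch_opp_nat_eq u t : (u <= t)%nat ->
  poch (- INR t) u = INR (Factorial.fact t) / ((-1) ^ u * INR (Factorial.fact (t - u))).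
Proof.
  intro Hu. rewrite <- (poch_opp_nat u t Hu).
  field. split; [apply Rgt_not_eq, INR_fact_pos | apply pow_nonzero; lra].
Qed.

Lemma poch_half_eq t :
  poch (1 / 2 - INR t) (t + 1) =
  INR (Factorial.fact (2 * t)) / ((-1) ^ t * (2 * 4 ^ t * INR (Factorial.fact t))).
Proof.
  rewrite Nat.add_1_r, <- (poch_half t).
  field. repeat split; try apply pow_nonzero; try lra. apply Rgt_not_eq, INR_fact_pos.
Qed.

Lemma pow_opp_even (x : R) k : (- x) ^ (2 * k) = (x ^ 2) ^ k.
Proof. rewrite pow_mult. f_equal. ring. Qed.

Lemma pow_opp_odd (x : R) k : (- x) ^ (2 * k + 1) = - x * (x ^ 2) ^ k.
Proof. rewrite pow_add, pow_opp_even. ring. Qed.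

(* The coefficient of [(s/2)^N] in [(-PI/6)^m u^m / m!], for [u = catalan_root s]. *)
Definition exp_term (s : R) (m N : nat) : R :=
  / INR (Factorial.fact m) * (- (PI / 6)) ^ m * (ballot N m * (s / 2) ^ N).

Lemma exp_term_eq0_lt s m N : (N < m)%nat -> exp_term s m N = 0.
Proof. intro H. unfold exp_term. rewrite ballot_eq0_lt by exact H. ring. Qed.

Lemma exp_term_eq0_odd s m N : Nat.Odd (N + m) -> exp_term s m N = 0.
Proof. intro H. unfold exp_term. rewrite ballot_eq0_odd by exact H. ring. Qed.

Lemma exp_term_even s (k d : nat) :
  exp_term s (2 * k + 2) (2 * (k + d + 1))
  = ((-1) ^ (k + d + 1) / 24 ^ (k + d + 1) * poch (1 / 2 - INR (k + d + 1)) (k + d + 1 + 1)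
       / INR (k + d + 1) * (24 * s ^ 2) ^ (k + d + 1)) *
    ((-1) ^ (k + 1) * poch (- INR (k + d + 1)) (k + 1)
       / (INR (Factorial.fact (k + d + 1 + (k + 1))) * INR (Factorial.fact (2 * (k + 1) - 1)))
       * (PI ^ 2 / 36) ^ (k + 1)).
Proof.
  unfold exp_term.
  rewrite poch_half_eq, poch_opp_nat_eq by lia.
  set (T := (k + d + 1)%nat).
  assert (Ea : (- (PI / 6)) ^ (2 * k + 2) = (PI ^ 2 / 36) ^ (k + 1)).
  { replace (2 * k + 2)%nat with (2 * (k + 1))%nat by lia. rewrite pow_opp_even. f_equal; field. }
  assert (Es : (s / 2) ^ (2 * T) = (s ^ 2) ^ T / 4 ^ T).
  { rewrite pow_mult. replace ((s / 2) ^ 2) with (s ^ 2 * / 4) by field.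
    rewrite Rpow_mult_distr, pow_inv. reflexivity. }
  assert (Eb : ballot (2 * T) (2 * k + 2) = ballot_formula (2 * k + 1) d).
  { rewrite <- ballot_closed. f_equal; unfold T; lia. }
  rewrite Ea, Es, Eb, Rpow_mult_distr. unfold ballot_formula.
  replace (T - (k + 1))%nat with d by (unfold T; lia).
  replace (T + (k + 1))%nat with (2 * k + 1 + 1 + d)%nat by (unfold T; lia).
  replace (2 * (k + 1) - 1)%nat with (2 * k + 1)%nat by lia.
  replace (2 * T)%nat with (S (2 * k + 1 + 2 * d)) by (unfold T; lia).
  replace (2 * k + 2)%nat with (S (2 * k + 1)) by lia.
  rewrite !INR_fact_S.
  pose proof (INR_fact_pos T); pose proof (INR_fact_pos d); pose proof (INR_fact_pos (2 * k + 1)).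
  pose proof (INR_fact_pos (2 * k + 1 + 2 * d)); pose proof (INR_fact_pos (2 * k + 1 + 1 + d)).
  unfold T in *. rewrite !S_INR, !plus_INR, !mult_INR in *. simpl (INR 2); simpl (INR 1).
  pose proof (pos_INR k); pose proof (pos_INR d).
  field. repeat split; first [lra | apply pow_nonzero; lra].
Qed.

Lemma exp_term_odd s (p d : nat) :
  exp_term s (2 * p + 1) (2 * (p + d) + 1)
  = (- (PI / (12 * sqrt 6)) * ((-1) ^ (p + d) * poch (1 / 2 - INR (p + d)) (p + d + 1) / 24 ^ (p + d))
       * (2 * sqrt 6 * s) ^ (2 * (p + d) + 1)) *
    ((-1) ^ p * poch (- INR (p + d)) p
       / (INR (Factorial.fact (p + d + p + 1)) * INR (Factorial.fact (2 * p)))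
       * (PI ^ 2 / 36) ^ p).
Proof.
  unfold exp_term.
  rewrite poch_half_eq, poch_opp_nat_eq by lia.
  set (T := (p + d)%nat).
  assert (S6 : sqrt 6 * sqrt 6 = 6) by (apply sqrt_sqrt; lra).
  assert (S6p : 0 < sqrt 6) by (apply sqrt_lt_R0; lra).
  assert (Ea : (- (PI / 6)) ^ (2 * p + 1) = - (PI / 6) * (PI ^ 2 / 36) ^ p).
  { rewrite pow_opp_odd. f_equal. f_equal. field. }
  assert (Es : forall c, (c * s) ^ (2 * T + 1) = c * s * ((c * c) * s ^ 2) ^ T).
  { intro c. rewrite pow_add, pow_mult. replace ((c * s) ^ 2) with (c * c * s ^ 2) by ring.
    simpl. ring. }
  assert (Eb : ballot (2 * T + 1) (2 * p + 1) = ballot_formula (2 * p) d).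
  { rewrite <- ballot_closed. f_equal; unfold T; lia. }
  replace (s / 2) with (/ 2 * s) by field.
  rewrite Ea, !Es, Eb. unfold ballot_formula.
  replace (2 * sqrt 6 * (2 * sqrt 6)) with 24 by nra.
  replace (T - p)%nat with d by (unfold T; lia).
  replace (T + p + 1)%nat with (2 * p + 1 + d)%nat by (unfold T; lia).
  replace (2 * T)%nat with (2 * p + 2 * d)%nat by (unfold T; lia).
  replace (2 * p + 1)%nat with (S (2 * p)) by lia.
  rewrite INR_fact_S.
  pose proof (INR_fact_pos T); pose proof (INR_fact_pos d); pose proof (INR_fact_pos (2 * p)).
  pose proof (INR_fact_pos (2 * p + 2 * d)); pose proof (INR_fact_pos (S (2 * p) + d)).
  pose proof (pos_INR p).
  replace (/ 2 * / 2) with (/ 4) by field.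
  rewrite !Rpow_mult_distr, pow_inv, S_INR, mult_INR. simpl (INR 2).
  field. repeat split; first [lra | apply pow_nonzero; lra].
Qed.

Lemma sumR_even_support (g : nat -> R) K :
  (forall p, g (2 * p + 1)%nat = 0) -> sumR g (S (2 * K)) = sumR (fun p => g (2 * p)%nat) (S K).
Proof.
  intro H. cbn [sumR]. rewrite sumR_pairs, (sumR_eq0 (fun p => g (2 * p + 1)%nat)) by auto.
  ring.
Qed.

Lemma sumR_odd_support (g : nat -> R) K :
  (forall p, g (2 * p)%nat = 0) -> sumR g (2 * K) = sumR (fun p => g (2 * p + 1)%nat) K.
Proof.
  intro H. rewrite sumR_pairs, (sumR_eq0 (fun p => g (2 * p)%nat)) by auto. ring.
Qed.

Lemma exp_diag_even s t :
  sumR (fun m => exp_term s m (2 * t)) (S (2 * t)) = e1 t * (24 * s ^ 2) ^ t.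
Proof.
  rewrite sumR_even_support by (intro p; apply exp_term_eq0_odd; exists (t + p)%nat; lia).
  destruct t as [|t].
  - unfold exp_term. simpl. field.
  - rewrite sumR_first. unfold exp_term at 1. rewrite ballot_pos_0, Rmult_0_l, Rmult_0_r, Rplus_0_l by lia.
    unfold e1. rewrite Rmult_assoc, (Rmult_comm (sumR _ _)), <- Rmult_assoc, <- sumR_scal.
    apply sumR_ext. intros k Hk.
    replace (S t) with (k + (t - k) + 1)%nat by lia.
    replace (2 * S k)%nat with (2 * k + 2)%nat by lia.
    apply exp_term_even.
Qed.

Lemma exp_diag_odd s t :
  sumR (fun m => exp_term s m (2 * t + 1)) (S (2 * t + 1)) = o1 t * (2 * sqrt 6 * s) ^ (2 * t + 1).
Proof.
  replace (S (2 * t + 1)) with (2 * (t + 1))%nat by lia.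
  rewrite sumR_odd_support by (intro p; apply exp_term_eq0_odd; exists (t + p)%nat; lia).
  unfold o1. rewrite Rmult_assoc, (Rmult_comm (sumR _ _)), <- Rmult_assoc, <- sumR_scal.
  apply sumR_ext. intros p Hp.
  replace t with (p + (t - p))%nat by lia.
  apply exp_term_odd.
Qed.

Lemma PI_6_bounds : 0 < PI / 6 < 1.
Proof. pose proof PI_RGT_0; pose proof PI_4; lra. Qed.

Lemma exp_term_bound s m N : 0 < s < 1 -> Rabs (exp_term s m N) <= (PI / 6) ^ m * s ^ N.
Proof.
  intro Hs. pose proof PI_6_bounds. unfold exp_term.
  rewrite !Rabs_mult, Rabs_inv, <- RPow_abs, Rabs_Ropp, !Rabs_right
    by (apply Rle_ge; first [apply pos_INR | lra]).
  assert (Hf : 1 <= INR (Factorial.fact m)) by apply (le_INR 1), Factorial.lt_O_fact.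
  assert (0 < / INR (Factorial.fact m) <= 1).
  { split; [apply Rinv_0_lt_compat; lra|]. rewrite <- Rinv_1. apply Rinv_le_contravar; lra. }
  pose proof (ballot_term_bound (s / 2) N m ltac:(lra)) as Hb.
  replace (2 * (s / 2)) with s in Hb by field.
  pose proof (pow_le (PI / 6) m ltac:(lra)). pose proof (Rabs_pos (ballot N m * (s / 2) ^ N)).
  rewrite <- Rabs_mult.
  replace ((PI / 6) ^ m * s ^ N) with (1 * (PI / 6) ^ m * s ^ N) by ring.
  apply Rmult_le_compat; [apply Rmult_le_pos; lra | lra | apply Rmult_le_compat_r; lra | lra].
Qed.

Lemma is_series_exp_term s m : 0 < s < 1 ->
  is_series (exp_term s m) (/ INR (Factorial.fact m) * (- (PI / 6) * catalan_root s) ^ m).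
Proof.
  intro Hs.
  rewrite Rpow_mult_distr, <- Rmult_assoc, <- (ballot_gf_catalan_root s m Hs).
  apply (@is_series_scal_l R_AbsRing R_NormedModule), Series_correct, ex_series_ballot. lra.
Qed.

Lemma is_series_exp_diag s : 0 < s < 1 ->
  is_series (fun N => sumR (fun m => exp_term s m N) (S N)) (exp (- (PI / 6) * catalan_root s)).
Proof.
  intro Hs. pose proof PI_6_bounds.
  apply (is_series_triangle_swap _
           (fun m => / INR (Factorial.fact m) * (- (PI / 6) * catalan_root s) ^ m) s (PI / 6));
    try lra.
  - apply exp_term_eq0_lt.
  - intros m N. apply exp_term_bound, Hs.
  - intro m. apply is_series_exp_term, Hs.
  - apply is_pseries_R, is_exp_Reals.
Qed.

Lemma exp_diag_bound s N : 0 < s < 1 ->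
  Rabs (sumR (fun m => exp_term s m N) (S N)) <= / (1 - PI / 6) * s ^ N.
Proof.
  intro Hs. pose proof PI_6_bounds.
  eapply Rle_trans; [apply sumR_abs|].
  eapply Rle_trans; [apply (sumR_le _ (fun m => s ^ N * (PI / 6) ^ m)) |].
  - intro m. rewrite Rmult_comm. apply exp_term_bound, Hs.
  - rewrite sumR_scal, Rmult_comm. apply Rmult_le_compat_r; [apply pow_le; lra|].
    apply sumR_geom_le. lra.
Qed.

Lemma sqrt_24_mult n : 0 <= n -> sqrt (24 * n) = 2 * sqrt 6 * sqrt n.
Proof.
  intro Hn. replace (24 * n) with ((2 * 2) * (6 * n)) by ring.
  rewrite sqrt_mult, sqrt_square, sqrt_mult by lra. ring.
Qed.

Lemma exponent_eq_catalan_root n : 0 < n ->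
  PI * sqrt (2 * n / 3) * (sqrt (1 - 1 / (24 * n)) - 1) =
  - (PI / 6) * catalan_root (/ sqrt (24 * n)).
Proof.
  intro Hn. set (q := sqrt (24 * n)).
  assert (Hq : 0 < q) by (apply sqrt_lt_R0; lra).
  assert (E1 : sqrt (2 * n / 3) = q / 6).
  { unfold q. replace (24 * n) with ((2 * n / 3) * (6 * 6)) by field.
    rewrite sqrt_mult, sqrt_square by lra. field. }
  assert (E2 : 1 - 1 / (24 * n) = 1 - (/ q) ^ 2).
  { unfold q. rewrite pow_inv, <- Rsqr_pow2, Rsqr_sqrt by lra. field. lra. }
  rewrite E1, E2. unfold catalan_root. field. lra.
Qed.

Lemma Rpower_neg_half_odd n t : 0 < n ->
  Rpower n (- (2 * INR t + 1) / 2) = (2 * sqrt 6 * / sqrt (24 * n)) ^ (2 * t + 1).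
Proof.
  intro Hn.
  replace (- (2 * INR t + 1) / 2) with (- (/ 2 * INR (2 * t + 1)))
    by (rewrite plus_INR, mult_INR; simpl; field).
  rewrite Rpower_Ropp, <- Rpower_mult, Rpower_sqrt, Rpower_pow, <- pow_inv
    by (try apply sqrt_lt_R0; lra).
  f_equal. rewrite sqrt_24_mult by lra.
  assert (0 < sqrt 6) by (apply sqrt_lt_R0; lra).
  assert (0 < sqrt n) by (apply sqrt_lt_R0; lra).
  field. lra.
Qed.

Theorem mainTheorem4 (n : nat) (hn : (1 <= n)%nat) :
  exists A B : R,
    is_series (fun t : nat => e1 t * / (INR n) ^ t) A /\
    is_series (fun t : nat => o1 t * Rpower (INR n) (- (2 * INR t + 1) / 2)) B /\
    exp (PI * sqrt (2 * INR n / 3) * (sqrt (1 - 1 / (24 * INR n)) - 1)) = A + B.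
Proof.
  assert (Hn : 0 < INR n) by (apply lt_0_INR; lia).
  set (s := / sqrt (24 * INR n)).
  assert (Hq1 : 1 < sqrt (24 * INR n)).
  { rewrite <- sqrt_1. apply sqrt_lt_1; pose proof (le_INR 1 n hn); simpl in *; lra. }
  assert (Hs : 0 < s < 1).
  { unfold s. split; [apply Rinv_0_lt_compat; lra|].
    rewrite <- Rinv_1. apply Rinv_lt_contravar; lra. }
  assert (Hs2 : s ^ 2 = / (24 * INR n)).
  { unfold s. rewrite pow_inv, <- Rsqr_pow2, Rsqr_sqrt by lra. reflexivity. }
  destruct (is_series_even_odd _ _ s _ ltac:(lra) (fun N => exp_diag_bound s N Hs)
              (is_series_exp_diag s Hs)) as [A [B [HA [HB HAB]]]].
  exists A, B. split; [|split].
  - refine (is_series_ext _ _ _ _ HA). intro t.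
    replace (/ INR n ^ t) with ((24 * s ^ 2) ^ t)
      by (rewrite Hs2, <- pow_inv; f_equal; field; lra).
    apply exp_diag_even.
  - refine (is_series_ext _ _ _ _ HB). intro t.
    rewrite Rpower_neg_half_odd by exact Hn. apply exp_diag_odd.
  - rewrite exponent_eq_catalan_root by exact Hn. exact HAB.
Qed.
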